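(* In the discrete single-buyer game with known total value $V$, there exists a mechanism for the seller which obtains total revenue at least $V/e-O(1)$ (the $O(1)$ being a constant independent of $T$ and of the buyer's values), when the buyer follows a dominant strategy.
   Context: Discrete single-buyer game: $T$ rounds, one divisible item per round; the buyer has value $v_t\in[0,1]$ for the round-$t$ item, arbitrary and unknown to the seller except that the total $V=\sum_t v_t$ is known to the seller. The buyer is limited-liability: in each round it cannot pay more than its value for the fraction of the item it receives. The seller may pay a reimbursement at the end; revenue is total payments minus reimbursements. A dominant strategy for the buyer is a utility-maximizing strategy (utility = value received minus payments plus reimbursement). *)

From Stdlib Require Import Reals Lra List.
Import ListNotations.
Open Scope R_scope.

Definition sumT (T : nat) (f : nat -> R) : R :=
  fold_right Rplus 0 (map f (seq 0 T)).

(** An option (allocation fraction x, payment p) chosen by the buyer in a round. *)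
Definition choice := (R * R)%type.

(** In each round t, given the
    history h of the buyer's previous choices (observed by the seller), the
    seller offers a menu of (allocation, payment) options; at the end it pays
    a reimbursement depending on the whole history. The mechanism does not
    depend on the values (only on T and V, through the existential). *)
Record mechanism := Mech {
  menu : nat -> list choice -> choice -> Prop;
  reimb : list choice -> R
}.

Definition wf_mechanism (M : mechanism) : Prop :=
  (forall t h c, menu M t h c -> 0 <= fst c <= 1 /\ 0 <= snd c) /\
  (forall t h, menu M t h (0, 0)) /\
  (forall h, 0 <= reimb M h).

(** A buyer strategy (for a fixed, known value profile) : the choice made in each round. *)
Definition strategy := nat -> choice.

Definition history (s : strategy) (t : nat) : list choice := map s (seq 0 t).

(** Feasible play: each choice is on the offered menu and respects limited
    liability (payment at most value of the received fraction). *)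
Definition feasible (T : nat) (M : mechanism) (v : nat -> R) (s : strategy) : Prop :=
  forall t, (t < T)%nat ->
    menu M t (history s t) (s t) /\ snd (s t) <= v t * fst (s t).

Definition utility (T : nat) (M : mechanism) (v : nat -> R) (s : strategy) : R :=
  sumT T (fun t => v t * fst (s t) - snd (s t)) + reimb M (history s T).

Definition revenue (T : nat) (M : mechanism) (s : strategy) : R :=
  sumT T (fun t => snd (s t)) - reimb M (history s T).

Definition dominant (T : nat) (M : mechanism) (v : nat -> R) (s : strategy) : Prop :=
  feasible T M v s /\
  forall s', feasible T M v s' -> utility T M v s' <= utility T M v s.

Definition valid_values (T : nat) (V : R) (v : nat -> R) : Prop :=
  (forall t, (t < T)%nat -> 0 <= v t <= 1) /\ sumT T v = V.

(* The seller sells the item at a rate depending on the total [P] paid so far: a payment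
   [p] buys the fraction [alloc P = exp (min (P, c) / c - 1)], [c = V / e], and so certifies
   value [p / alloc P]; the buyer is refunded [V / e + 1] iff the certified values add up
   to [V].  Limited liability makes certified value at most true value, so certifying [V]
   forces truthful payments [p_t = v_t alloc P_t] in every round.  A buyer who does not
   certify [V] keeps the potential [U + alloc P (V - W)], with [U] the utility and [W]
   the value of the rounds so far, below its initial value [V / e], hence loses against
   truthful certification.  For a truthful buyer, [level P], whose derivative is
   [1 / alloc], grows by at least [v_t (1 - 1 / c)] per round, so [level P >= V - e];
   since [level P <= P + c (e - 2)], the payments are at least [2 V / e - e] and the
   revenue at least [V / e - e - 1]. *)

From Stdlib Require Import Reals Lra Lia List.
Open Scope R_scope.

Lemma fold_right_Rplus_shift (l : list R) (a : R) :
  fold_right Rplus a l = fold_right Rplus 0 l + a.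
Proof. induction l as [|x l IH]; simpl; [lra | rewrite IH; lra]. Qed.

Lemma sumT_S (n : nat) (f : nat -> R) : sumT (S n) f = sumT n f + f n.
Proof.
  unfold sumT. rewrite seq_S, map_app, fold_right_app. simpl.
  rewrite fold_right_Rplus_shift. lra.
Qed.

Lemma sumT_ext (n : nat) (f g : nat -> R) :
  (forall t, (t < n)%nat -> f t = g t) -> sumT n f = sumT n g.
Proof.
  induction n as [|n IH]; intros Hfg; [reflexivity|].
  rewrite !sumT_S, IH, Hfg; auto with arith.
Qed.

Lemma sumT_zero (n : nat) : sumT n (fun _ => 0) = 0.
Proof. induction n as [|n IH]; [reflexivity | rewrite sumT_S, IH; ring]. Qed.

Lemma sumT_le (n : nat) (f g : nat -> R) :
  (forall t, (t < n)%nat -> f t <= g t) -> sumT n f <= sumT n g.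
Proof.
  induction n as [|n IH]; intros Hfg; [unfold sumT; simpl; lra|].
  rewrite !sumT_S. specialize (IH ltac:(auto with arith)).
  specialize (Hfg n ltac:(auto with arith)). lra.
Qed.

Lemma sumT_le_eq (n : nat) (f g : nat -> R) :
  (forall t, (t < n)%nat -> f t <= g t) -> sumT n f = sumT n g ->
  forall t, (t < n)%nat -> f t = g t.
Proof.
  induction n as [|n IH]; intros Hfg Hsum t Ht; [lia|].
  rewrite !sumT_S in Hsum.
  assert (Hn := Hfg n ltac:(lia)).
  assert (Hle : sumT n f <= sumT n g) by (apply sumT_le; auto with arith).
  destruct (Nat.eq_dec t n) as [->|Htn]; [lra|].
  apply IH; [auto with arith | lra | lia].
Qed.

Lemma Rmin_diff_bounds (a b c : R) :
  a <= b -> 0 <= Rmin b c - Rmin a c <= b - a.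
Proof. intros Hab. unfold Rmin. destruct (Rle_dec a c), (Rle_dec b c); lra. Qed.

Section PriceCurve.

Variable c : R.
Hypothesis c_pos : 0 < c.

Definition alloc (q : R) : R := exp (Rmin q c / c - 1).

(* [level q] is the value certified by paying [q] along the curve: [level' = 1 / alloc]. *)
Definition level (q : R) : R := c * (exp 1 - / alloc q) + (q - Rmin q c).

Lemma alloc_pos (q : R) : 0 < alloc q.
Proof. apply exp_pos. Qed.

Lemma inv_alloc (q : R) : / alloc q = exp (1 - Rmin q c / c).
Proof. unfold alloc. rewrite <- exp_Ropp. f_equal. ring. Qed.

Lemma alloc_mul_inv (q : R) : alloc q * / alloc q = 1.
Proof. apply Rinv_r. apply Rgt_not_eq, alloc_pos. Qed.

Lemma inv_alloc_ratio (a b : R) :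
  / alloc b = / alloc a * exp (- ((Rmin b c - Rmin a c) / c)).
Proof. rewrite !inv_alloc, <- exp_plus. f_equal. field. lra. Qed.

Lemma inv_alloc_ge1 (q : R) : 1 <= / alloc q.
Proof.
  rewrite inv_alloc.
  assert (Hm : Rmin q c / c <= 1).
  { replace 1 with (c / c) by (field; lra).
    apply Rmult_le_compat_r; [apply Rlt_le, Rinv_0_lt_compat, c_pos | apply Rmin_r]. }
  pose proof (exp_ineq1_le (1 - Rmin q c / c)). lra.
Qed.

Lemma alloc_le_1 (q : R) : alloc q <= 1.
Proof.
  rewrite <- (Rinv_inv (alloc q)), <- Rinv_1.
  apply Rinv_le_contravar; [lra | apply inv_alloc_ge1].
Qed.

Lemma alloc_0 : alloc 0 = / exp 1.
Proof.
  unfold alloc. rewrite Rmin_left by lra. rewrite <- exp_Ropp. f_equal. field. lra.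
Qed.

Lemma inv_alloc_cap (q : R) : c <= q -> / alloc q = 1.
Proof.
  intros Hq. rewrite inv_alloc, Rmin_right by exact Hq.
  replace (1 - c / c) with 0 by (field; lra). apply exp_0.
Qed.

Lemma exp_ratio_ge1 (a b : R) : a <= b -> 1 <= exp (- ((Rmin a c - Rmin b c) / c)).
Proof.
  intros Hab. pose proof (Rmin_diff_bounds a b c Hab) as HD.
  assert (HDc : 0 <= (Rmin b c - Rmin a c) / c)
    by (apply Rmult_le_pos; [lra | apply Rlt_le, Rinv_0_lt_compat, c_pos]).
  pose proof (exp_ineq1_le (- ((Rmin a c - Rmin b c) / c))) as He.
  lra.
Qed.

Lemma alloc_le (a b : R) : a <= b -> alloc a <= alloc b.
Proof.
  intros Hab.
  rewrite <- (Rinv_inv (alloc a)), <- (Rinv_inv (alloc b)).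
  apply Rinv_le_contravar; [apply Rinv_0_lt_compat, alloc_pos|].
  rewrite (inv_alloc_ratio b a).
  pose proof (inv_alloc_ge1 b). pose proof (exp_ratio_ge1 a b Hab).
  nra.
Qed.

Lemma level_0 : level 0 = 0.
Proof.
  unfold level. rewrite alloc_0, Rinv_inv, Rmin_left by lra. ring.
Qed.

Lemma level_cap : level c = c * (exp 1 - 1).
Proof.
  unfold level. rewrite inv_alloc_cap, Rmin_left by lra. ring.
Qed.

Lemma level_diff (a b : R) :
  level b - level a = c * (/ alloc a - / alloc b) + ((b - a) - (Rmin b c - Rmin a c)).
Proof. unfold level. ring. Qed.

Lemma level_diff_le (a b : R) : a <= b -> level b - level a <= (b - a) / alloc a.
Proof.
  intros Hab. rewrite level_diff.
  pose proof (Rmin_diff_bounds a b c Hab) as HD.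
  set (D := Rmin b c - Rmin a c) in *.
  pose proof (inv_alloc_ge1 a) as Ha.
  pose proof (exp_ineq1_le (- (D / c))) as He.
  assert (Hb : / alloc a * (1 - D / c) <= / alloc b)
    by (rewrite (inv_alloc_ratio a b); fold D; apply Rmult_le_compat_l; lra).
  assert (Hgap : c * (/ alloc a - / alloc b) <= / alloc a * D).
  { pose proof (alloc_pos a).
    replace (/ alloc a * D) with (c * (/ alloc a * (D / c))) by (field; repeat split; lra).
    apply Rmult_le_compat_l; lra. }
  assert (0 <= (/ alloc a - 1) * ((b - a) - D)) by (apply Rmult_le_pos; lra).
  unfold Rdiv. nra.
Qed.

Lemma level_diff_ge (a b : R) : a <= b -> (b - a) / alloc b <= level b - level a.
Proof.
  intros Hab. rewrite level_diff.
  pose proof (Rmin_diff_bounds a b c Hab) as HD.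
  set (D := Rmin b c - Rmin a c) in *.
  pose proof (inv_alloc_ge1 b) as Hb.
  pose proof (exp_ineq1_le (- ((Rmin a c - Rmin b c) / c))) as He.
  assert (Ha : / alloc b * (1 + D / c) <= / alloc a).
  { rewrite (inv_alloc_ratio b a). apply Rmult_le_compat_l; unfold D; lra. }
  assert (Hgap : / alloc b * D <= c * (/ alloc a - / alloc b)).
  { pose proof (alloc_pos b).
    replace (/ alloc b * D) with (c * (/ alloc b * (D / c))) by (field; repeat split; lra).
    apply Rmult_le_compat_l; lra. }
  assert (Hflat : (/ alloc b - 1) * ((b - a) - D) = 0).
  { destruct (Rle_dec b c) as [Hbc | Hbc].
    - unfold D. rewrite !Rmin_left by lra. ring.
    - rewrite inv_alloc_cap by lra. ring. }
  unfold Rdiv. nra.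
Qed.

Lemma level_le (q : R) : level q <= q + c * (exp 1 - 2).
Proof.
  pose proof level_cap as Hc.
  destruct (Rle_dec q c) as [Hq | Hq].
  - pose proof (level_diff_ge q c Hq) as H.
    unfold Rdiv in H. rewrite inv_alloc_cap in H by lra. lra.
  - pose proof (level_diff_le c q ltac:(lra)) as H.
    unfold Rdiv in H. rewrite inv_alloc_cap in H by lra. lra.
Qed.

Lemma alloc_gap_le (a b : R) :
  a <= b -> (alloc b - alloc a) * (c * exp 1 - level b) <= b - a.
Proof.
  intros Hab.
  pose proof (Rmin_diff_bounds a b c Hab) as HD.
  set (D := Rmin b c - Rmin a c) in *.
  pose proof (alloc_le a b Hab) as Hmono.
  assert (Hlev : c * exp 1 - level b <= c * / alloc b)
    by (unfold level; pose proof (Rmin_l b c); lra).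
  assert (Hratio : alloc a * / alloc b = exp (- (D / c))).
  { rewrite (inv_alloc_ratio a b), <- Rmult_assoc, alloc_mul_inv. fold D. ring. }
  pose proof (exp_ineq1_le (- (D / c))) as He.
  assert (Hgap : (alloc b - alloc a) * (c * / alloc b) = c * (1 - exp (- (D / c)))).
  { rewrite <- Hratio.
    replace ((alloc b - alloc a) * (c * / alloc b))
      with (c * (alloc b * / alloc b) - c * (alloc a * / alloc b)) by ring.
    rewrite alloc_mul_inv. ring. }
  assert (c * (1 - exp (- (D / c))) <= D).
  { replace D with (c * (D / c)) at 2 by (field; lra). apply Rmult_le_compat_l; lra. }
  assert ((alloc b - alloc a) * (c * exp 1 - level b) <= (alloc b - alloc a) * (c * / alloc b))
    by (apply Rmult_le_compat_l; lra).
  lra.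
Qed.

Lemma level_step_ge (P v : R) :
  0 <= v <= 1 -> v - v / c <= level (P + v * alloc P) - level P.
Proof.
  intros Hv. set (d := v * alloc P).
  pose proof (alloc_pos P). pose proof (alloc_le_1 P).
  assert (Hd : 0 <= d <= v) by (unfold d; split; nra).
  pose proof (level_diff_ge P (P + d) ltac:(lra)) as Hlev.
  replace (P + d - P) with d in Hlev by ring.
  pose proof (Rmin_diff_bounds P (P + d) c ltac:(lra)) as HD.
  set (D := Rmin (P + d) c - Rmin P c) in *.
  assert (Hval : d / alloc (P + d) = v * exp (- (D / c))).
  { unfold Rdiv at 1. rewrite (inv_alloc_ratio P (P + d)). fold D. unfold d. field. lra. }
  pose proof (exp_ineq1_le (- (D / c))) as He.
  assert (HDc : D / c <= 1 / c)
    by (apply Rmult_le_compat_r; [apply Rlt_le, Rinv_0_lt_compat, c_pos | lra]).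
  assert (v * (1 - 1 / c) <= v * exp (- (D / c))) by (apply Rmult_le_compat_l; lra).
  unfold Rdiv in *. lra.
Qed.

Lemma potential_step (P W U v x p : R) :
  0 <= v -> level P <= W ->
  (x, p) = (0, 0) \/ x = alloc P /\ 0 <= p -> p <= v * x ->
  level (P + p) <= W + v /\
  U + (v * x - p) + alloc (P + p) * (c * exp 1 - (W + v))
    <= U + alloc P * (c * exp 1 - W).
Proof.
  intros Hv HW Hmenu Hll. pose proof (alloc_pos P).
  destruct Hmenu as [Hnull | [-> Hp]].
  - injection Hnull as -> ->. rewrite Rplus_0_r. split; nra.
  - assert (Hcert : p / alloc P <= v).
    { apply Rmult_le_reg_r with (alloc P); [lra|].
      unfold Rdiv. rewrite Rmult_assoc, Rinv_l, Rmult_1_r; lra. }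
    pose proof (level_diff_le P (P + p) ltac:(lra)) as Hlev.
    replace (P + p - P) with p in Hlev by ring.
    split; [lra|].
    pose proof (alloc_gap_le P (P + p) ltac:(lra)) as Hgap.
    replace (P + p - P) with p in Hgap by ring.
    pose proof (alloc_le P (P + p) ltac:(lra)).
    assert ((alloc (P + p) - alloc P) * (c * exp 1 - (W + v))
            <= (alloc (P + p) - alloc P) * (c * exp 1 - level (P + p)))
      by (apply Rmult_le_compat_l; lra).
    lra.
Qed.

End PriceCurve.

Definition paid (h : list choice) : R := fold_right Rplus 0 (map snd h).

Definition certified_value (o : choice) : R :=
  if Rlt_dec 0 (fst o) then snd o / fst o else 0.

Definition certified (h : list choice) : R := fold_right Rplus 0 (map certified_value h).

Lemma paid_history (s : strategy) (t : nat) :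
  paid (history s t) = sumT t (fun i => snd (s i)).
Proof. unfold paid, history, sumT. rewrite map_map. reflexivity. Qed.

Lemma paid_history_S (s : strategy) (t : nat) :
  paid (history s (S t)) = paid (history s t) + snd (s t).
Proof. rewrite !paid_history. apply sumT_S. Qed.

Lemma certified_history (s : strategy) (t : nat) :
  certified (history s t) = sumT t (fun i => certified_value (s i)).
Proof. unfold certified, history, sumT. rewrite map_map. reflexivity. Qed.

Lemma certified_value_le (o : choice) (w : R) :
  0 <= w -> snd o <= w * fst o -> certified_value o <= w.
Proof.
  intros Hw Hll. unfold certified_value.
  destruct (Rlt_dec 0 (fst o)) as [Hx | Hx]; [|exact Hw].
  apply Rmult_le_reg_r with (fst o); [exact Hx|].
  unfold Rdiv. rewrite Rmult_assoc, Rinv_l, Rmult_1_r; lra.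
Qed.

(* The bonus [1] in the reimbursement makes certifying exactly [V] strictly better than
   any deviation, so that every dominant strategy is truthful. *)
Definition price_mech (V : R) : mechanism :=
  Mech (fun _ h o => o = (0, 0) \/ fst o = alloc (V / exp 1) (paid h) /\ 0 <= snd o)
       (fun h => if Req_EM_T (certified h) V then V / exp 1 + 1 else 0).

Definition null_mech : mechanism := Mech (fun _ _ o => o = (0, 0)) (fun _ => 0).

Fixpoint honest_paid (c : R) (v : nat -> R) (t : nat) : R :=
  match t with
  | O => 0
  | S t => honest_paid c v t + v t * alloc c (honest_paid c v t)
  end.

Definition honest (c : R) (v : nat -> R) : strategy :=
  fun t => (alloc c (honest_paid c v t), v t * alloc c (honest_paid c v t)).

Lemma paid_history_honest (c : R) (v : nat -> R) (t : nat) :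
  paid (history (honest c v) t) = honest_paid c v t.
Proof.
  rewrite paid_history. induction t as [|t IH]; [reflexivity|].
  rewrite sumT_S, IH. reflexivity.
Qed.

Lemma exp1_pos : 0 < exp 1.
Proof. apply exp_pos. Qed.

Lemma price_mech_wf (V : R) : 0 < V -> wf_mechanism (price_mech V).
Proof.
  intros HV. pose proof exp1_pos.
  assert (Hc : 0 < V / exp 1) by (apply Rdiv_lt_0_compat; lra).
  split; [|split].
  - intros t h o [-> | [-> Hp]]; simpl; [lra|].
    pose proof (alloc_pos (V / exp 1) (paid h)).
    pose proof (alloc_le_1 (V / exp 1) Hc (paid h)). lra.
  - intros t h. left. reflexivity.
  - intros h. simpl. destruct (Req_EM_T (certified h) V); lra.
Qed.

Section Buyer.

Variables (V : R) (T : nat) (v : nat -> R).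
Hypothesis V_pos : 0 < V.
Hypothesis v_range : forall t, (t < T)%nat -> 0 <= v t <= 1.
Hypothesis v_sum : sumT T v = V.

Local Notation c := (V / exp 1).
Local Notation M := (price_mech V).

Lemma cap_pos : 0 < c.
Proof. apply Rdiv_lt_0_compat; [exact V_pos | apply exp1_pos]. Qed.

Lemma cap_mul_exp1 : c * exp 1 = V.
Proof. pose proof exp1_pos. field. lra. Qed.

Lemma feasible_potential (s : strategy) :
  feasible T M v s -> forall t, (t <= T)%nat ->
  level c (paid (history s t)) <= sumT t v /\
  sumT t (fun i => v i * fst (s i) - snd (s i)) + alloc c (paid (history s t)) * (V - sumT t v)
    <= c.
Proof.
  intros Hf. induction t as [|t IH]; intros Ht.
  - unfold sumT. simpl. rewrite level_0, alloc_0 by exact cap_pos. unfold Rdiv. lra.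
  - destruct (Hf t ltac:(lia)) as [Hmenu Hll]. simpl in Hmenu.
    destruct (IH ltac:(lia)) as [Hlev Hpot].
    rewrite paid_history_S, !sumT_S.
    destruct (potential_step c cap_pos _ _
                (sumT t (fun i => v i * fst (s i) - snd (s i)))
                (v t) (fst (s t)) (snd (s t)) (proj1 (v_range t ltac:(lia))) Hlev
                ltac:(rewrite <- surjective_pairing; exact Hmenu) Hll) as [Hlev' Hpot'].
    rewrite cap_mul_exp1 in Hpot'. split; lra.
Qed.

Lemma utility_le_uncertified (s : strategy) :
  feasible T M v s -> certified (history s T) <> V -> utility T M v s <= c.
Proof.
  intros Hf Hcert. destruct (feasible_potential s Hf T (le_n T)) as [_ Hpot].
  rewrite v_sum, Rminus_diag, Rmult_0_r, Rplus_0_r in Hpot.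
  unfold utility. simpl. destruct (Req_EM_T (certified (history s T)) V); [contradiction|].
  lra.
Qed.

Lemma certified_rounds (s : strategy) :
  feasible T M v s -> certified (history s T) = V ->
  forall t, (t < T)%nat ->
  snd (s t) = v t * fst (s t) /\ snd (s t) = v t * alloc c (paid (history s t)).
Proof.
  intros Hf Hcert t Ht.
  assert (Hle : forall i, (i < T)%nat -> certified_value (s i) <= v i).
  { intros i Hi. destruct (Hf i Hi) as [_ Hll].
    exact (certified_value_le (s i) (v i) (proj1 (v_range i Hi)) Hll). }
  rewrite certified_history, <- v_sum in Hcert.
  pose proof (sumT_le_eq T _ _ Hle Hcert t Ht) as Heq.
  destruct (Hf t Ht) as [[Hnull | [Hx Hp]] _]; unfold certified_value in Heq.
  - rewrite Hnull in Heq |- *. simpl in Heq |- *. destruct (Rlt_dec 0 0); [lra|].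
    rewrite <- Heq. split; ring.
  - pose proof (alloc_pos c (paid (history s t))).
    rewrite Hx in Heq |- *. destruct (Rlt_dec 0 (alloc c (paid (history s t)))); [|lra].
    assert (Hpay : snd (s t) = v t * alloc c (paid (history s t))) by (rewrite <- Heq; field; lra).
    split; exact Hpay.
Qed.

Lemma utility_certified (s : strategy) :
  feasible T M v s -> certified (history s T) = V -> utility T M v s = c + 1.
Proof.
  intros Hf Hcert. unfold utility. simpl.
  destruct (Req_EM_T (certified (history s T)) V); [|contradiction].
  rewrite (sumT_ext T _ (fun _ => 0)), sumT_zero; [ring|].
  intros t Ht. destruct (certified_rounds s Hf Hcert t Ht) as [Hpay _]. lra.
Qed.

Lemma honest_feasible : feasible T M v (honest c v).
Proof.
  intros t Ht. simpl. rewrite paid_history_honest.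
  pose proof (alloc_pos c (honest_paid c v t)).
  pose proof (v_range t Ht). split; [|lra].
  right. split; [reflexivity | nra].
Qed.

Lemma honest_certified : certified (history (honest c v) T) = V.
Proof.
  rewrite certified_history. transitivity (sumT T v); [|exact v_sum]. apply sumT_ext. intros t _.
  unfold certified_value, honest. simpl.
  pose proof (alloc_pos c (honest_paid c v t)).
  destruct (Rlt_dec 0 (alloc c (honest_paid c v t))); [field|]; lra.
Qed.

Lemma honest_dominant : dominant T M v (honest c v).
Proof.
  split; [exact honest_feasible|]. intros s Hf.
  rewrite (utility_certified _ honest_feasible honest_certified).
  destruct (Req_EM_T (certified (history s T)) V) as [Hcert | Hcert].
  - rewrite (utility_certified s Hf Hcert). lra.
  - pose proof (utility_le_uncertified s Hf Hcert). lra.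
Qed.

Lemma dominant_certified (s : strategy) : dominant T M v s -> certified (history s T) = V.
Proof.
  intros [Hf Hbest].
  destruct (Req_EM_T (certified (history s T)) V) as [Hcert | Hcert]; [exact Hcert|].
  pose proof (Hbest _ honest_feasible) as Hge.
  rewrite (utility_certified _ honest_feasible honest_certified) in Hge.
  pose proof (utility_le_uncertified s Hf Hcert). lra.
Qed.

Lemma level_of_certified_rounds (s : strategy) :
  (forall t, (t < T)%nat -> snd (s t) = v t * alloc c (paid (history s t))) ->
  forall t, (t <= T)%nat -> sumT t v - sumT t v / c <= level c (paid (history s t)).
Proof.
  intros Hpay. induction t as [|t IH]; intros Ht.
  - unfold sumT. simpl. rewrite level_0 by exact cap_pos. unfold Rdiv. lra.
  - rewrite paid_history_S, (Hpay t ltac:(lia)), sumT_S.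
    pose proof (level_step_ge c cap_pos (paid (history s t)) (v t) (v_range t ltac:(lia))).
    specialize (IH ltac:(lia)). unfold Rdiv in *. lra.
Qed.

Lemma dominant_revenue (s : strategy) :
  dominant T M v s -> revenue T M s >= V / exp 1 - (exp 1 + 1).
Proof.
  intros Hdom. pose proof (dominant_certified s Hdom) as Hcert.
  destruct Hdom as [Hf _].
  assert (Hlev := level_of_certified_rounds s
                    (fun t Ht => proj2 (certified_rounds s Hf Hcert t Ht)) T (le_n T)).
  rewrite v_sum in Hlev.
  replace (V / c) with (exp 1) in Hlev by (pose proof exp1_pos; field; lra).
  pose proof (level_le c cap_pos (paid (history s T))) as Hup.
  pose proof cap_mul_exp1.
  unfold revenue. simpl. rewrite <- paid_history.
  destruct (Req_EM_T (certified (history s T)) V); [|contradiction].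
  lra.
Qed.

End Buyer.

Lemma null_mech_wf : wf_mechanism null_mech.
Proof.
  split; [|split]; simpl.
  - intros t h o ->. simpl. lra.
  - reflexivity.
  - intros _. lra.
Qed.

Lemma null_mech_feasible_sums (T : nat) (v : nat -> R) (s : strategy) :
  feasible T null_mech v s ->
  utility T null_mech v s = 0 /\ revenue T null_mech s = 0.
Proof.
  intros Hf.
  assert (Hzero : forall t, (t < T)%nat -> s t = (0, 0)) by (intros t Ht; apply (Hf t Ht)).
  unfold utility, revenue. simpl.
  rewrite (sumT_ext T _ (fun _ => 0)), (sumT_ext T (fun t => snd (s t)) (fun _ => 0)), sumT_zero;
    [split; ring | |]; intros t Ht; rewrite (Hzero t Ht); simpl; ring.
Qed.

Lemma null_mech_dominant (T : nat) (v : nat -> R) :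
  (forall t, (t < T)%nat -> 0 <= v t) -> dominant T null_mech v (fun _ => (0, 0)).
Proof.
  intros Hv.
  assert (Hf0 : feasible T null_mech v (fun _ => (0, 0))).
  { intros t Ht. simpl. split; [reflexivity|]. specialize (Hv t Ht). lra. }
  split; [exact Hf0|]. intros s Hf.
  rewrite (proj1 (null_mech_feasible_sums T v s Hf)), (proj1 (null_mech_feasible_sums T v _ Hf0)).
  lra.
Qed.

Theorem theorem17 :
  exists C : R,
    forall (T : nat) (V : R),
      exists M : mechanism,
        wf_mechanism M /\
        forall v : nat -> R,
          valid_values T V v ->
          (exists s, dominant T M v s) /\
          (forall s, dominant T M v s -> revenue T M s >= V / exp 1 - C).
Proof.
  exists (exp 1 + 1). intros T V. pose proof exp1_pos.
  destruct (Rle_lt_dec V 0) as [HV | HV].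
  - exists null_mech. split; [exact null_mech_wf|]. intros v [Hv _].
    split.
    + exists (fun _ => (0, 0)). apply null_mech_dominant. intros t Ht. apply Hv, Ht.
    + intros s [Hf _]. rewrite (proj2 (null_mech_feasible_sums T v s Hf)).
      assert (0 < / exp 1) by (apply Rinv_0_lt_compat; lra).
      assert (V / exp 1 <= 0) by (unfold Rdiv; nra).
      lra.
  - exists (price_mech V). split; [exact (price_mech_wf V HV)|]. intros v [Hv Hsum].
    split.
    + exists (honest (V / exp 1) v). exact (honest_dominant V T v HV Hv Hsum).
    + exact (dominant_revenue V T v HV Hv Hsum).
Qed.
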